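(* Let $A$ be an integral domain and let $B=A[u]$ be an overring of $A$ that is flat over $A$, where $u$ is a unit of $B$. Then there is a positive integer $m$ such that $u^{-r}\in A$ for all integers $r\ge m$. Consequently $B$ is a localization of $A$.
   Context: For an integral domain $A$ with field of fractions $K$, an overring of $A$ is a subring of $K$ containing $A$; it is a localization of $A$ if it equals $S^{-1}A$ for some multiplicatively closed set $S$ of nonzero elements of $A$. *)

From HB Require Import structures.
From mathcomp Require Import all_boot all_order all_algebra.
Set Implicit Arguments. Unset Strict Implicit. Unset Printing Implicit Defensive.
Import Order.TTheory GRing.Theory Num.Theory.
Local Open Scope ring_scope.

(* Subsets of K (overrings) are predicates K -> Prop. *)

Definition emb (A : idomainType) : A -> {fraction A} := @FracField.tofrac A.

Definition adjoin (A : idomainType) (u : {fraction A}) : {fraction A} -> Prop :=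
  fun x => exists p : {poly A}, x = (map_poly (@emb A) p).[u].

Definition bilinear_on (A : idomainType) (B : {fraction A} -> Prop)
  (M P : lmodType A) (phi : M -> {fraction A} -> P) : Prop :=
  [/\ (forall b m1 m2, B b -> phi (m1 + m2) b = phi m1 b + phi m2 b),
      (forall m b1 b2, B b1 -> B b2 -> phi m (b1 + b2) = phi m b1 + phi m b2),
      (forall a m b, B b -> phi (a *: m) b = a *: phi m b) &
      (forall a m b, B b -> phi m (emb a * b) = a *: phi m b)].

(* The element \sum_i m_i (x) b_i of M (x)_A B is zero; characterized by the
   universal property of the tensor product: every A-bilinear map kills it. *)
Definition tensor_zero (A : idomainType) (B : {fraction A} -> Prop)
  (M : lmodType A) (s : seq (M * {fraction A})) : Prop :=
  forall (P : lmodType A) (phi : M -> {fraction A} -> P),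
    bilinear_on B phi -> \sum_(x <- s) phi x.1 x.2 = 0.

(* B (an A-submodule of K) is flat over A: for every injective A-linear map
   f : M -> N, the induced map M (x)_A B -> N (x)_A B is injective. *)
Definition flat_over (A : idomainType) (B : {fraction A} -> Prop) : Prop :=
  forall (M N : lmodType A) (f : {linear M -> N}), injective f ->
  forall s : seq (M * {fraction A}), (forall x, x \in s -> B x.2) ->
    tensor_zero B [seq (f x.1, x.2) | x <- s] -> tensor_zero B s.

Definition is_localization (A : idomainType) (B : {fraction A} -> Prop) : Prop :=
  exists S : A -> Prop,
    [/\ S 1, (forall s t, S s -> S t -> S (s * t)), (forall s, S s -> s != 0) &
        forall x, B x <-> exists a s, S s /\ x = emb a / emb s].

From HB Require Import structures.
From mathcomp Require Import all_boot all_order all_algebra.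
From mathcomp Require Import boolp ring.
Import GRing.Theory.
Set Implicit Arguments. Unset Strict Implicit. Unset Printing Implicit Defensive.
Local Open Scope ring_scope.
Local Open Scope quotient_scope.

(* Let I = {c in A | c u^-m in A for all m} be the conductor of A[u^-1] into A.
   As u^-1 = q0(u), the powers u^-j with j < n = size q0 generate A[u^-1] over A,
   so c |-> (c u^-j mod A)_(j<n) embeds A/I into (K/A)^n.  In (K/A)^n (x) B the
   image of 1 (x) 1 vanishes: each u^-j lies in B, and for b = e/q in B the class
   of b in K/A is e z with q z = 0, so (b mod A) (x) 1 = z (x) q b = q z (x) b = 0.
   Flatness of B then kills 1 (x) 1 in A/I (x) B; the bilinear map
   (c, b) |-> c b mod IB into K/IB turns this into 1 = p(u) with p over I, and
   then u^-r = sum_k p_k u^-(r-k) lies in A for r > deg p.  Finally every p(u)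
   in B is a / u^-r with a, u^-r in A, so B is the localization of A at the
   powers of u^-1 lying in A. *)

Section QuotientModule.
Variables (R : pzRingType) (V : lmodType R) (S : submodClosed V).

Lemma submod_oppr_closed : oppr_closed S.
Proof. by move=> x Sx; rewrite -scaleN1r rpredZ. Qed.

(* Over a ring a submodule is an additive subgroup, which is what MathComp's
   [{quot _}] needs. *)
Definition submod_zmodClosed : zmodClosed V :=
  HB.pack (S : {pred V}) S (GRing.isOppClosed.Build V S submod_oppr_closed).

Local Notation Q := (Quotient.quot submod_zmodClosed).

Lemma pi_eq x y : (\pi_Q x == \pi_Q y) = (x - y \in S).
Proof. by rewrite -Quotient.idealrBE. Qed.

Lemma repr_piB x : repr (\pi_Q x) - x \in S.
Proof. by rewrite -pi_eq reprK. Qed.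

Lemma piD x y : \pi_Q (x + y) = \pi_Q x + \pi_Q y.
Proof. exact: raddfD. Qed.

Lemma pi_eq0 x : (\pi_Q x == 0) = (x \in S).
Proof. by rewrite -(raddf0 \pi_Q) pi_eq subr0. Qed.

Definition scaleq (a : R) : Q -> Q := lift_op1 Q ( *:%R a).

Lemma pi_scaleq a x : \pi_Q (a *: x) = scaleq a (\pi_Q x).
Proof.
unlock scaleq; apply/eqP; rewrite pi_eq -scalerBr rpredZ //.
by rewrite -pi_eq reprK.
Qed.

Lemma scaleqA a b x : scaleq a (scaleq b x) = scaleq (a * b) x.
Proof. by rewrite -[x]reprK -!pi_scaleq scalerA. Qed.

Lemma scaleq1 : left_id 1 scaleq.
Proof. by move=> x; rewrite -[x]reprK -pi_scaleq scale1r. Qed.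

Lemma scaleqDr : right_distributive scaleq +%R.
Proof.
by move=> a x y; rewrite -[x]reprK -[y]reprK -!pi_scaleq -!piD -pi_scaleq scalerDr.
Qed.

Lemma scaleqDl x : {morph scaleq^~ x : a b / a + b}.
Proof. by move=> a b; rewrite -[x]reprK -!pi_scaleq -piD scalerDl. Qed.

HB.instance Definition _ :=
  GRing.Zmodule_isLmodule.Build R Q scaleqA scaleq1 scaleqDr scaleqDl.

Lemma piZ a x : \pi_Q (a *: x) = a *: \pi_Q x.
Proof. exact: pi_scaleq. Qed.

Section QuotientLift.
Variables (W : lmodType R) (g : {linear V -> W}).

(* The unused proof argument lets inference find the linear instance below. *)
Definition quot_lift of {in S, forall x, g x = 0} := fun q : Q => g (repr q).

Hypothesis gS : {in S, forall x, g x = 0}.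
Local Notation lift := (quot_lift gS).

Lemma quot_liftE x : lift (\pi_Q x) = g x.
Proof.
by apply/eqP; rewrite -subr_eq0 -linearB /quot_lift gS ?repr_piB.
Qed.

Lemma quot_lift_is_linear : linear lift.
Proof.
move=> a x y; rewrite -[x]reprK -[y]reprK.
by rewrite -piZ -piD !quot_liftE linearP.
Qed.

HB.instance Definition _ :=
  GRing.isLinear.Build R Q W *:%R lift quot_lift_is_linear.

Lemma quot_lift_inj : (forall x, g x = 0 -> x \in S) -> injective lift.
Proof.
move=> kerg x y; rewrite -[x]reprK -[y]reprK !quot_liftE => gxy.
by apply/eqP; rewrite pi_eq kerg // linearB gxy subrr.
Qed.

End QuotientLift.
End QuotientModule.

Notation "{ 'quotmod' S }" := (Quotient.quot (@submod_zmodClosed _ _ S))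
  (format "{ 'quotmod'  S }") : type_scope.
Arguments quot_lift : simpl never.

HB.instance Definition _ (A : idomainType) := GRing.RMorphism.on (@emb A).

Lemma emb_inj (A : idomainType) : injective (@emb A).
Proof. by move=> a b /eqP; rewrite tofrac_eq => /eqP. Qed.

Lemma horner_emb (A : idomainType) (p : {poly A}) (x : {fraction A}) :
  (map_poly (@emb A) p).[x] = \sum_(i < size p) emb p`_i * x ^+ i.
Proof.
rewrite horner_coef (size_map_inj_poly (@emb_inj A) (rmorph0 _)).
by apply: eq_bigr => i _; rewrite coef_map.
Qed.

Lemma frac_numden (A : idomainType) (x : {fraction A}) :
  exists n d, d != 0 /\ x = emb n / emb d.
Proof.
elim/quotW: x => r; exists (\n_r), (\d_r); split; first exact: denom_ratioP.
have d_neq0 : emb \d_r != 0 by rewrite tofrac_eq0 denom_ratioP.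
apply: (mulIf d_neq0); rewrite mulfVK // /emb /GRing.mul /= !piE; apply/eqmodP.
rewrite /= FracField.equivfE /FracField.mulf.
by rewrite !numden_Ratio ?mulr1 ?oner_neq0 ?denom_ratioP ?mulf_neq0 // mulrC.
Qed.

Section FractionModule.
Variable A : idomainType.

Definition frac_mod : Type := {fraction A}.
HB.instance Definition _ := GRing.Zmodule.on frac_mod.

Definition frac_scale (a : A) (x : frac_mod) : frac_mod := emb a * x.

Lemma frac_scaleA a b x : frac_scale a (frac_scale b x) = frac_scale (a * b) x.
Proof. by rewrite /frac_scale rmorphM mulrA. Qed.

Lemma frac_scale1 : left_id 1 frac_scale.
Proof. by move=> x; rewrite /frac_scale rmorph1 mul1r. Qed.

Lemma frac_scaleDr : right_distributive frac_scale +%R.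
Proof. by move=> a x y; rewrite /frac_scale mulrDr. Qed.

Lemma frac_scaleDl x : {morph frac_scale^~ x : a b / a + b}.
Proof. by move=> a b; rewrite /frac_scale rmorphD mulrDl. Qed.

HB.instance Definition _ := GRing.Zmodule_isLmodule.Build A frac_mod
  frac_scaleA frac_scale1 frac_scaleDr frac_scaleDl.

Lemma frac_scaleE a (x : frac_mod) : a *: x = emb a * x.
Proof. by []. Qed.

Definition im_emb : {pred frac_mod} := fun x => `[< exists a, x = emb a >].

Lemma im_embP x : reflect (exists a, x = emb a) (x \in im_emb).
Proof. exact: asboolP. Qed.

Lemma emb_im_emb a : emb a \in im_emb.
Proof. by apply/im_embP; exists a. Qed.

Lemma im_emb_submod_closed : submod_closed im_emb.
Proof.
split=> [|c _ _ /im_embP[a ->] /im_embP[b ->]].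
  by rewrite -(rmorph0 (@emb A)) emb_im_emb.
by rewrite frac_scaleE -rmorphM -rmorphD emb_im_emb.
Qed.

HB.instance Definition _ :=
  GRing.isSubmodClosed.Build A frac_mod im_emb im_emb_submod_closed.

End FractionModule.

Lemma emb_eq0 (A : idomainType) (a : A) : (emb a == 0) = (a == 0).
Proof. exact: tofrac_eq0. Qed.

Lemma expfVB (F : fieldType) (x : F) i k :
  x != 0 -> (i <= k)%N -> x ^+ i * x ^- k = x ^- (k - i).
Proof. by move=> x0 ik; rewrite exprB ?unitfE // invf_div. Qed.

Section Adjoin.
Variables (A : idomainType) (u : {fraction A}).

Lemma adjoin_emb a : adjoin u (emb a).
Proof. by exists a%:P; rewrite map_polyC hornerC. Qed.

Lemma adjoin1 : adjoin u 1.
Proof. by have := adjoin_emb 1; rewrite rmorph1. Qed.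

Lemma adjoinM x y : adjoin u x -> adjoin u y -> adjoin u (x * y).
Proof. by move=> [p ->] [q ->]; exists (p * q); rewrite rmorphM hornerM. Qed.

Lemma adjoinX x k : adjoin u x -> adjoin u (x ^+ k).
Proof.
move=> Bx; elim: k => [|k IHk]; first by rewrite expr0; apply: adjoin1.
by rewrite exprS; apply: adjoinM.
Qed.

Lemma adjoin_self : adjoin u u.
Proof. by exists 'X; rewrite map_polyX hornerX. Qed.

End Adjoin.

Section FfunDelta.
Variables (R : pzRingType) (I : finType) (W : lmodType R).

Definition ffun_delta (i : I) (w : W) : {ffun I -> W} :=
  [ffun k => if k == i then w else 0].

Lemma ffun_delta_is_linear i : linear (ffun_delta i).
Proof.
move=> a w w'; apply/ffunP => k; rewrite !ffunE.
by case: ifP => _; rewrite ?scaler0 ?addr0.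
Qed.

HB.instance Definition _ i :=
  GRing.isLinear.Build R W {ffun I -> W} *:%R (ffun_delta i)
    (ffun_delta_is_linear i).

Lemma ffun_sum_delta (x : {ffun I -> W}) : x = \sum_i ffun_delta i (x i).
Proof.
apply/ffunP => k; rewrite sum_ffunE (bigD1 k) //= big1 => [|i ik].
  by rewrite ffunE eqxx addr0.
by rewrite ffunE eq_sym (negbTE ik).
Qed.

End FfunDelta.

Section BilinearOn.
Variables (A : idomainType) (B : {fraction A} -> Prop) (M P : lmodType A).
Variable phi : M -> {fraction A} -> P.
Hypothesis phiB : bilinear_on B phi.

Lemma bilinear_on0l b : B b -> phi 0 b = 0.
Proof.
by case: phiB => _ _ phiZl _ Bb; have := phiZl 0 0 b Bb; rewrite !scale0r.
Qed.

Lemma bilinear_on_suml (I : Type) (r : seq I) (F : I -> M) b : B b ->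
  phi (\sum_(i <- r) F i) b = \sum_(i <- r) phi (F i) b.
Proof.
case: phiB => phiDl _ _ _ Bb.
exact: (big_morph (phi^~ b) (fun x y => phiDl b x y Bb) (bilinear_on0l Bb)).
Qed.

Lemma bilinear_on_torsion z q e b : B 1 -> B b ->
  q *: z = 0 -> emb e = emb q * b -> phi (e *: z) 1 = 0.
Proof.
case: phiB => _ _ phiZl phiZr B1 Bb qz eb.
rewrite (phiZl e z 1 B1) -(phiZr e z 1 B1) mulr1 eb (phiZr q z b Bb).
by rewrite -(phiZl q z b Bb) qz bilinear_on0l.
Qed.

End BilinearOn.

Lemma bilinear_on_frac_quot (A : idomainType) (B : {fraction A} -> Prop)
    (N P : lmodType A) (phi : N -> {fraction A} -> P)
    (h : {linear {quotmod (@im_emb A)} -> N}) (b : frac_mod A) :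
  bilinear_on B phi -> B 1 -> B b -> phi (h (\pi b)) 1 = 0.
Proof.
move=> phiB B1 Bb; have [e [q [q_neq0 be]]] := frac_numden b.
have embq0 : emb q != 0 by rewrite emb_eq0.
pose z := \pi_{quotmod (@im_emb A)} ((emb q)^-1 : frac_mod A).
have qz : q *: z = 0.
  apply/eqP; rewrite -piZ frac_scaleE mulfV // pi_eq0.
  by rewrite -(rmorph1 (@emb A)) emb_im_emb.
have -> : \pi b = e *: z by rewrite -piZ frac_scaleE be.
rewrite linearZ; apply: (bilinear_on_torsion (q := q) phiB B1 Bb).
  by rewrite -linearZ qz linear0.
by rewrite be mulrCA mulfV // mulr1.
Qed.

Section FlatInversePowers.
Variables (A : idomainType) (u : {fraction A}) (q0 : {poly A}).
Hypotheses (u_neq0 : u != 0) (uV_def : u^-1 = (map_poly (@emb A) q0).[u]).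
Local Notation B := (adjoin u).
Local Notation n := (size q0).

Definition conductor : {pred A^o} :=
  fun c : A => `[< forall m, emb c * u ^- m \in @im_emb A >].

Lemma conductorP (c : A) :
  reflect (forall m, emb c * u ^- m \in @im_emb A) (c \in conductor).
Proof. exact: asboolP. Qed.

Lemma conductor_submod_closed : submod_closed conductor.
Proof.
split=> [|a c d /conductorP Ic /conductorP Id]; apply/conductorP => m.
  by rewrite rmorph0 mul0r rpred0.
rewrite -[a *: c]/(a * (c : A)) rmorphD rmorphM mulrDl -mulrA -frac_scaleE.
by apply: rpredD; [apply: rpredZ; apply: Ic | apply: Id].
Qed.

HB.instance Definition _ :=
  GRing.isSubmodClosed.Build A A^o conductor conductor_submod_closed.

Lemma conductor_powers (c : A) :
  (forall j : 'I_n, emb c * u ^- j \in @im_emb A) -> c \in conductor.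
Proof.
move=> Ic; apply/conductorP => m; elim/ltn_ind: m => m IH.
have [lt_m_n | le_n_m] := ltnP m n; first exact: (Ic (Ordinal lt_m_n)).
case: m IH le_n_m => [|k] IH le_n_k1; first by rewrite invr1 mulr1 emb_im_emb.
have -> : u ^- k.+1 = u ^- k * u^-1 by rewrite exprSr invfM.
rewrite uV_def horner_emb !mulr_sumr; apply: rpred_sum => i _.
have le_i_k : (i <= k)%N by rewrite -ltnS (leq_trans _ le_n_k1).
have -> : emb c * (u ^- k * (emb q0`_i * u ^+ i)) =
          emb q0`_i * (emb c * (u ^+ i * u ^- k)) by ring.
rewrite expfVB // -frac_scaleE.
by apply: rpredZ; apply: IH; rewrite ltnS leq_subr.
Qed.

Local Notation N := {ffun 'I_n -> {quotmod (@im_emb A)}}.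

Definition inverse_powers (c : A^o) : N :=
  [ffun j : 'I_n => \pi_{quotmod (@im_emb A)} (emb (c : A) * u ^- j : frac_mod A)].

Lemma inverse_powers_is_linear : linear inverse_powers.
Proof.
move=> a c d; apply/ffunP => j; rewrite !ffunE -piZ -piD frac_scaleE.
by rewrite -[a *: c]/(a * (c : A)) rmorphD rmorphM mulrDl mulrA.
Qed.

HB.instance Definition _ := GRing.isLinear.Build A A^o N *:%R
  inverse_powers inverse_powers_is_linear.

Lemma inverse_powers_conductor : {in conductor, forall c, inverse_powers c = 0}.
Proof.
move=> c /conductorP Ic; apply/ffunP => j; rewrite !ffunE.
by apply/eqP; rewrite pi_eq0.
Qed.

Local Notation conductor_embedding := (quot_lift inverse_powers_conductor).

Lemma conductor_embedding_inj : injective conductor_embedding.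
Proof.
apply: quot_lift_inj => c /ffunP c0; apply: conductor_powers => j.
by have := c0 j; rewrite !ffunE => /eqP; rewrite pi_eq0.
Qed.

Lemma tensor_zero_conductor_embedding1 :
  tensor_zero B [:: (conductor_embedding (\pi_{quotmod conductor} 1), 1)].
Proof.
move=> P phi phiB; rewrite big_seq1 /= quot_liftE.
set x := (X in phi X 1).
rewrite (ffun_sum_delta x) (bilinear_on_suml phiB _ _ (adjoin1 u)).
apply: big1 => j _; rewrite /x /= ffunE rmorph1 mul1r.
apply: bilinear_on_frac_quot phiB (adjoin1 u) _.
by rewrite -exprVn; apply: adjoinX; rewrite uV_def; exists q0.
Qed.

Definition ext_conductor : {pred frac_mod A} := fun x =>
  `[< exists2 p : {poly A}, p \is a polyOver conductor &
                            x = (map_poly (@emb A) p).[u] >].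

Lemma ext_conductorP x : reflect
  (exists2 p : {poly A}, p \is a polyOver conductor &
                         x = (map_poly (@emb A) p).[u])
  (x \in ext_conductor).
Proof. exact: asboolP. Qed.

Lemma ext_conductor_submod_closed : submod_closed ext_conductor.
Proof.
split=> [|a x y /ext_conductorP[p Ip ->] /ext_conductorP[q Iq ->]].
  by apply/ext_conductorP; exists 0; rewrite ?rpred0 // map_poly0 horner0.
apply/ext_conductorP.
exists (a *: p + q); last by rewrite raddfD /= map_polyZ hornerD hornerZ.
apply/polyOverP => k; rewrite coefD coefZ.
by apply: rpredD; [exact: (rpredZ a (polyOverP Ip k)) | exact: (polyOverP Iq)].
Qed.

HB.instance Definition _ :=
  GRing.isSubmodClosed.Build A (frac_mod A) ext_conductor
    ext_conductor_submod_closed.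

Lemma ext_conductorM (c : A) b :
  c \in conductor -> B b -> emb c * b \in ext_conductor.
Proof.
move=> Ic [p ->]; apply/ext_conductorP; exists (c *: p).
  by apply/polyOverP => k; rewrite coefZ mulrC; exact: (rpredZ p`_k Ic).
by rewrite map_polyZ hornerZ.
Qed.

Local Notation pi_ext := \pi_{quotmod ext_conductor}.

Definition conductor_mul (m : {quotmod conductor}) (b : {fraction A}) :
  {quotmod ext_conductor} := pi_ext (emb (repr m : A) * b : frac_mod A).

Lemma conductor_mulE (c : A) b : B b ->
  conductor_mul (\pi_{quotmod conductor} c) b = pi_ext (emb c * b : frac_mod A).
Proof.
move=> Bb; apply/eqP; rewrite pi_eq -mulrBl -rmorphB ext_conductorM //.
exact: repr_piB.
Qed.

Lemma conductor_mul_bilinear : bilinear_on B conductor_mul.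
Proof.
split=> [b m1 m2 Bb | m b1 b2 _ _ | a m b Bb | a m b _].
- rewrite -[m1]reprK -[m2]reprK -piD !conductor_mulE //.
  by rewrite rmorphD mulrDl piD.
- by rewrite /conductor_mul mulrDr piD.
- rewrite -[m]reprK -piZ !conductor_mulE // -piZ frac_scaleE.
  by rewrite -[a *: _]/(a * (repr m : A)) rmorphM mulrA.
- by rewrite /conductor_mul -piZ frac_scaleE mulrCA.
Qed.

Hypothesis flatB : flat_over B.

Lemma ext_conductor1 : (1 : frac_mod A) \in ext_conductor.
Proof.
have tz : tensor_zero B [:: (\pi_{quotmod conductor} 1, 1)].
  apply: (flatB conductor_embedding_inj).
    by move=> x; rewrite inE => /eqP ->; apply: adjoin1.
  exact: tensor_zero_conductor_embedding1.
have := tz _ _ conductor_mul_bilinear.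
rewrite big_seq1 /= conductor_mulE; last exact: adjoin1.
by rewrite rmorph1 mul1r => /eqP; rewrite pi_eq0.
Qed.

Lemma flat_inverse_powers :
  exists m, (0 < m)%N /\ forall r, (m <= r)%N -> u ^- r \in @im_emb A.
Proof.
have /ext_conductorP[p Ip p1] := ext_conductor1.
exists (size p).+1; split=> // r lt_p_r.
rewrite -[u ^- r]mul1r p1 horner_emb mulr_suml; apply: rpred_sum => k _.
have le_k_r : (k <= r)%N := leq_trans (ltnW (ltn_ord k)) (ltnW lt_p_r).
rewrite -mulrA expfVB //.
by have /conductorP := polyOverP Ip k; apply.
Qed.

End FlatInversePowers.

Lemma adjoin_is_localization (A : idomainType) (u : {fraction A}) m :
  u != 0 -> (forall r, (m <= r)%N -> u ^- r \in @im_emb A) ->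
  is_localization (adjoin u).
Proof.
move=> u0 powA; exists (fun s => exists r, emb s = u ^- r); split.
- by exists 0%N; rewrite rmorph1 invr1.
- move=> s t [r sr] [k tk]; exists (r + k)%N.
  by rewrite rmorphM /= sr tk exprD invfM.
- by move=> s [r sr]; rewrite -(emb_eq0 s) sr invr_eq0 expf_neq0.
move=> x; split=> [[p ->] | [a [s [[r sr] ->]]]]; last first.
  rewrite sr invrK; apply: adjoinM; first exact: adjoin_emb.
  exact/adjoinX/adjoin_self.
pose r := (m + size p)%N.
have /im_embP[a pa] : (map_poly (@emb A) p).[u] * u ^- r \in @im_emb A.
  rewrite horner_emb mulr_suml; apply: rpred_sum => k _.
  have le_k_r : (k <= r)%N by rewrite (leq_trans (ltnW (ltn_ord k))) ?leq_addl.
  rewrite -mulrA expfVB // -frac_scaleE; apply/rpredZ/powA.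
  by rewrite leq_subRL // addnC /r leq_add2l ltnW.
have /im_embP[s es] := powA r (leq_addr _ _).
exists a, s; split; first by exists r.
by rewrite -pa -es mulfK // invr_eq0 expf_neq0.
Qed.

Theorem theorem4p1 (A : idomainType) (u : {fraction A}) :
  flat_over (adjoin u) ->
  (exists v, adjoin u v /\ u * v = 1) ->
  (exists m : nat, (0 < m)%N /\
     forall r : nat, (m <= r)%N -> exists a : A, emb a = u ^- r) /\
  is_localization (adjoin u).
Proof.
move=> flatB [v [[q0 v_def] uv1]].
have u0 : u != 0.
  by apply: contra_eq_neq uv1 => ->; rewrite mul0r eq_sym oner_neq0.
have uV : u^-1 = (map_poly (@emb A) q0).[u].
  by rewrite -v_def -(mulKf u0 v) uv1 mulr1.
have [m [m_gt0 powA]] := flat_inverse_powers u0 uV flatB.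
split; last exact: adjoin_is_localization u0 powA.
by exists m; split=> // r /powA /im_embP[a ->]; exists a.
Qed.
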